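(* Every connected finite graph $G=(V,E)$ (parallel edges and self-loops allowed) has the weighted strict Gauss–Lucas property: for every $0<\beta<1$, every legal weight assignment $w$ for $G$, and every collection of complex activities $(z_v)_{v\in V}$ with $|z_v|\ge 1$ for all $v\in V$, we have $\mathcal{D}_G Z_w(G)\neq 0$. Consequently $G$ also has the strict Gauss–Lucas property: under the same conditions on $\beta$ and $(z_v)$, $\mathcal{D}_G Z_I(G,\beta,(z_v)_{v\in V})\ne 0$.
   Context: Graphs may have parallel edges and self-loops; the degree $\deg(v)$ counts edges with multiplicity, a self-loop counting twice, and $d(\sigma)$ counts (with multiplicity) the edges $\{u,v\}$ whose endpoints receive different spins ($\sigma(u)\neq\sigma(v)$). For $\sigma\in\{+,-\}^V$, $0<\beta\le1$ and complex activities $(z_v)_{v\in V}$, the multivariate Ising partition function is $Z_I(G,\beta,(z_v))=\sum_{\sigma\in\{+,-\}^V}\beta^{d(\sigma)}\prod_{v:\sigma(v)=+}z_v$. A weight assignment $w:V\to\mathbb{Z}_{>0}$ is legal if $w(v)\ge\deg(v)$ for all $v$. The weighted partition function is $Z_w(G)=\sum_{\sigma\in\{+,-\}^V}\beta^{d(\sigma)}\prod_{v:\sigma(v)=+}z_v^{w(v)}$, a polynomial in the variables $(z_v)$. The operator $\mathcal{D}_G=\sum_{v\in V}z_v\frac{\partial}{\partial z_v}$. $G$ has the strict Gauss–Lucas property (SGLP) if $\mathcal{D}_GZ_I(G,\beta,(z_v))\neq0$ whenever $0<\beta<1$ and $|z_v|\ge1$ for all $v$; it has the weighted strict Gauss–Lucas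 property (WSGLP) if $\mathcal{D}_GZ_w(G)\ne0$ for every legal $w$ under the same conditions. *)

From HB Require Import structures.
From mathcomp Require Import all_boot all_order all_algebra.
Set Implicit Arguments. Unset Strict Implicit. Unset Printing Implicit Defensive.
Import Order.TTheory GRing.Theory Num.Theory.
Local Open Scope ring_scope.

(* A finite multigraph (parallel edges and self-loops allowed):
   vertex type V, edge type E, and each edge e has endpoints ends e = (u, v).
   A self-loop is an edge with (ends e).1 = (ends e).2. *)

(* degree with multiplicity, a self-loop counting twice *)
Definition deg (V E : finType) (ends : E -> V * V) (v : V) : nat :=
  (\sum_(e : E) (((ends e).1 == v) + ((ends e).2 == v)))%N.

Definition adj (V E : finType) (ends : E -> V * V) : rel V :=
  fun u v => [exists e : E, (ends e == (u, v)) || (ends e == (v, u))].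

Definition connected_graph (V E : finType) (ends : E -> V * V) : Prop :=
  (0 < #|V|)%N /\ forall u v : V, connect (adj ends) u v.

(* spins: sigma v = true means "+", false means "-".
   d(sigma): number of edges (with multiplicity) with differently-spinned ends *)
Definition dcut (V E : finType) (ends : E -> V * V) (sigma : {ffun V -> bool}) : nat :=
  #|[set e : E | sigma (ends e).1 != sigma (ends e).2]|.

Definition legal (V E : finType) (ends : E -> V * V) (w : V -> nat) : Prop :=
  forall v, (0 < w v)%N /\ (deg ends v <= w v)%N.

(* Weighted partition function Z_w evaluated at (beta, z):
   sum_sigma beta^{d(sigma)} prod_{v : sigma v = +} z_v^{w v}.
   The multivariate Ising partition function Z_I is the case w = 1. *)
Definition Zw (C : numClosedFieldType) (V E : finType) (ends : E -> V * V)
  (w : V -> nat) (beta : C) (z : V -> C) : C :=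
  \sum_(sigma : {ffun V -> bool})
     beta ^+ dcut ends sigma * \prod_(v | sigma v) z v ^+ w v.

(* The Euler operator D_G = sum_v z_v d/dz_v applied to the polynomial Z_w
   (in the variables z_v) and then evaluated at z.  On a monomial
   c * prod_v z_v^{k_v} the operator D_G acts as multiplication by sum_v k_v;
   Z_w is the sum over sigma of the monomials beta^{d sigma} prod_{sigma v} z_v^{w v},
   so by linearity D_G Z_w is the following sum. *)
Definition DZw (C : numClosedFieldType) (V E : finType) (ends : E -> V * V)
  (w : V -> nat) (beta : C) (z : V -> C) : C :=
  \sum_(sigma : {ffun V -> bool})
     beta ^+ dcut ends sigma * (\sum_(v | sigma v) w v)%N%:R
       * \prod_(v | sigma v) z v ^+ w v.

Definition WSGLP (C : numClosedFieldType) (V E : finType) (ends : E -> V * V) : Prop :=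
  forall (w : V -> nat) (beta : C) (z : V -> C),
    legal ends w -> 0 < beta -> beta < 1 -> (forall v, 1 <= `|z v|) ->
    DZw ends w beta z != 0.

Definition SGLP (C : numClosedFieldType) (V E : finType) (ends : E -> V * V) : Prop :=
  forall (beta : C) (z : V -> C),
    0 < beta -> beta < 1 -> (forall v, 1 <= `|z v|) ->
    DZw ends (fun _ => 1%N) beta z != 0.

(* The Ising sum Z(x) = sum_sigma beta^d(sigma) prod_{sigma v = +} x_v of a connected
   graph has no zero on the closed unit polydisk minus the torus: starting from the
   edgeless graph, where Z = prod (1 + x_v), edges are added one at a time, and each
   addition preserves a zero-free region by a two-variable argument on the endpoints
   of the new edge.  The spin flip sigma -> -sigma turns this into: Z(x) <> 0 when
   all |x_v| >= 1 and some |x_v| > 1.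
   With y_v = z_v^w(v), D_G Z_w(z) = P'(1) for P(t) = Z((t^w(v) y_v)_v), whose roots
   lie in the closed unit disk.  If P(1) <> 0, then P'(1)/P(1) = sum 1/(1 - r) over
   the roots has positive real part (Gauss-Lucas).  If P(1) = 0, then |y_v| = 1;
   splitting P = A + y_v B by the spin at v, the zero-free region forces
   |t^w(v) A(t)| <= |B(t)| for real t > 1, which excludes a double root at 1. *)

From HB Require Import structures.
From mathcomp Require Import all_boot all_order all_algebra.
From mathcomp Require Import ring.
Set Implicit Arguments. Unset Strict Implicit. Unset Printing Implicit Defensive.
Import Order.TTheory GRing.Theory Num.Theory.
Local Open Scope ring_scope.

Section DiskInequalities.
Variable C : numClosedFieldType.
Implicit Types a b c d r s t : C.

Lemma ler_sqr_norm a b : (`|a| ^+ 2 <= `|b| ^+ 2) = (`|a| <= `|b|).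
Proof. exact: ler_sqr (normr_nneg a) (normr_nneg b). Qed.

Lemma ltr_sqr_norm a b : (`|a| ^+ 2 < `|b| ^+ 2) = (`|a| < `|b|).
Proof. exact: ltr_sqr (normr_nneg a) (normr_nneg b). Qed.

Lemma affine_eq0_norm a b t : a + b * t = 0 -> `|a| = `|b| * `|t|.
Proof. by move/eqP; rewrite addr_eq0 => /eqP ->; rewrite normrN normrM. Qed.

Lemma affine_neq0_closed_diskP a b :
  (forall t, `|t| <= 1 -> a + b * t != 0) <-> `|b| < `|a|.
Proof.
split=> [nz | ba t t1].
  have a0 : a != 0 by have := nz 0; rewrite normr0 ler01 mulr0 addr0; apply.
  have [-> | b0] := eqVneq b 0; first by rewrite normr0 normr_gt0.
  rewrite real_ltNge ?normr_real //; apply/negP => ab.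
  suff /nz : `|- a / b| <= 1 by rewrite mulrCA divff // mulr1 subrr eqxx.
  by rewrite normf_div normrN ler_pdivrMr ?normr_gt0 // mul1r.
apply/eqP => /affine_eq0_norm at_b.
have : `|b| * `|t| <= `|b| by apply: ler_piMr.
by rewrite -at_b real_leNgt ?normr_real // ba.
Qed.

Lemma affine_neq0_open_diskP a b :
  (forall t, `|t| < 1 -> a + b * t != 0) <-> `|b| <= `|a| /\ a != 0.
Proof.
split=> [nz | [ba a0] t t1].
  have a0 : a != 0 by have := nz 0; rewrite normr0 ltr01 mulr0 addr0; apply.
  split=> //; have [-> | b0] := eqVneq b 0; first by rewrite normr0 normr_ge0.
  rewrite real_leNgt ?normr_real //; apply/negP => ab.
  suff /nz : `|- a / b| < 1 by rewrite mulrCA divff // mulr1 subrr eqxx.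
  by rewrite normf_div normrN ltr_pdivrMr ?normr_gt0 // mul1r.
apply/eqP => /affine_eq0_norm at_b.
have [b0 | b0] := eqVneq b 0.
  by move: at_b a0; rewrite b0 normr0 mul0r => /normr0_eq0 ->; rewrite eqxx.
have : `|b| * `|t| < `|b| by rewrite gtr_pMr ?normr_gt0.
by rewrite -at_b real_ltNge ?normr_real // ba.
Qed.

Lemma mobius_sqr_norm r t : 0 <= r ->
  `|1 + r * t| ^+ 2 - `|r + t| ^+ 2 = (1 - r ^+ 2) * (1 - `|t| ^+ 2).
Proof.
move=> r_ge0; rewrite !normCK !(rmorphD, rmorphM, rmorph1) /=.
by rewrite (conj_Creal (ger0_real r_ge0)); ring.
Qed.

Lemma mobius_norm_le r t : 0 <= r -> r <= 1 -> `|t| <= 1 -> `|r + t| <= `|1 + r * t|.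
Proof.
move=> r_ge0 r_le1 t1; rewrite -ler_sqr_norm -subr_ge0 mobius_sqr_norm //.
by rewrite mulr_ge0 // subr_ge0 expr_le1.
Qed.

Lemma mobius_norm_lt r t : 0 <= r -> r < 1 -> `|t| < 1 -> `|r + t| < `|1 + r * t|.
Proof.
move=> r_ge0 r_lt1 t1; rewrite -ltr_sqr_norm -subr_gt0 mobius_sqr_norm //.
by rewrite mulr_gt0 // subr_gt0 expr_lt1.
Qed.

Lemma mobius_neq0 r t : 0 <= r -> r < 1 -> `|t| <= 1 -> 1 + r * t != 0.
Proof.
move=> r_ge0 r_lt1; apply: (affine_neq0_closed_diskP 1 r).2.
by rewrite normr1 ger0_norm.
Qed.

End DiskInequalities.

Section BilinearScaling.
Variable C : numClosedFieldType.
Implicit Types a b c d r s t : C.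

Definition bilin a b c d s t := a + b * s + c * t + d * s * t.

Definition free_closed_bidisk a b c d :=
  forall s t, `|s| <= 1 -> `|t| <= 1 -> bilin a b c d s t != 0.

Definition free_off_torus a b c d := forall s t, `|s| <= 1 -> `|t| <= 1 ->
  (`|s| < 1) || (`|t| < 1) -> bilin a b c d s t != 0.

Lemma bilinE a b c d s t : bilin a b c d s t = (a + b * s) + (c + d * s) * t.
Proof. by rewrite /bilin; ring. Qed.

Lemma bilinC a b c d s t : bilin a b c d s t = bilin a c b d t s.
Proof. by rewrite /bilin; ring. Qed.

Lemma free_closed_bidiskC a b c d :
  free_closed_bidisk a b c d -> free_closed_bidisk a c b d.
Proof. by move=> nz s t s1 t1; rewrite bilinC nz. Qed.

Lemma free_off_torusC a b c d : free_off_torus a b c d -> free_off_torus a c b d.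
Proof. by move=> nz s t s1 t1 st; rewrite bilinC nz // orbC. Qed.

Lemma free_closed_bidisk_gap a b c d s : free_closed_bidisk a b c d ->
  `|s| <= 1 -> `|c + d * s| < `|a + b * s|.
Proof.
by move=> nz s1; apply/affine_neq0_closed_diskP => t t1; rewrite -bilinE nz.
Qed.

Lemma free_off_torus_gap_le a b c d s : free_off_torus a b c d ->
  `|s| <= 1 -> `|c + d * s| <= `|a + b * s| /\ a + b * s != 0.
Proof.
move=> nz s1; apply/affine_neq0_open_diskP => t t1.
by rewrite -bilinE nz ?(ltW t1) ?t1 ?orbT.
Qed.

Lemma free_off_torus_gap_lt a b c d s : free_off_torus a b c d ->
  `|s| < 1 -> `|c + d * s| < `|a + b * s|.
Proof.
by move=> nz s1; apply/affine_neq0_closed_diskP => t t1; rewrite -bilinE nz ?(ltW s1) ?s1.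
Qed.

Lemma scaled_gap_ge a b c d r s : 0 <= r -> r <= 1 -> `|s| <= 1 ->
  (forall s, `|s| <= 1 -> `|c + d * s| <= `|a + b * s|) ->
  (forall t, `|t| <= 1 -> `|b + d * t| <= `|a + c * t|) ->
  r * (`|a + b * s| ^+ 2 - `|c + d * s| ^+ 2) <=
  `|a + r * b * s| ^+ 2 - `|r * c + d * s| ^+ 2.
Proof.
move=> r_ge0 r_le1 s1 gap_s gap_t.
have n1 : `|1 : C| <= 1 by rewrite normr1.
have nN1 : `|-1 : C| <= 1 by rewrite normrN normr1.
have [gs_p gs_m] := (gap_s 1 n1, gap_s (-1) nN1).
have [gt_p gt_m] := (gap_t 1 n1, gap_t (-1) nN1).
rewrite !mulr1 !mulrN1 in gs_p gs_m gt_p gt_m.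
have sq_gap (x y : C) : `|x| <= `|y| -> 0 <= `|y| ^+ 2 - `|x| ^+ 2.
  by rewrite subr_ge0 ler_sqr_norm.
have rr : r^* = r := conj_Creal (ger0_real r_ge0).
have defect : 4 * ((`|a + r * b * s| ^+ 2 - `|r * c + d * s| ^+ 2) -
              r * (`|a + b * s| ^+ 2 - `|c + d * s| ^+ 2)) =
  (1 - r) * (4 * ((r * `|b| ^+ 2 + `|d| ^+ 2) * (1 - `|s| ^+ 2)) +
     (1 + r) * ((`|a + c| ^+ 2 - `|b + d| ^+ 2) + (`|a - c| ^+ 2 - `|b - d| ^+ 2)) +
     (1 - r) * ((`|a + b| ^+ 2 - `|c + d| ^+ 2) + (`|a - b| ^+ 2 - `|c - d| ^+ 2))).
  by rewrite !normCK !(rmorphD, rmorphN, rmorphM, rmorph1) /= rr; ring.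
rewrite -subr_ge0 -(pmulr_rge0 _ (_ : 0 < 4)) ?ltr0n // defect.
have r_compl : 0 <= 1 - r by rewrite subr_ge0.
have s_compl : 0 <= 1 - `|s| ^+ 2 by rewrite subr_ge0 expr_le1.
apply: mulr_ge0 => //; apply: addr_ge0; first apply: addr_ge0.
- by rewrite mulr_ge0 ?ler0n // mulr_ge0 // addr_ge0 ?mulr_ge0 ?exprn_ge0.
- by apply: mulr_ge0; apply: addr_ge0; rewrite ?ler01 ?sq_gap.
- by apply: mulr_ge0 => //; apply: addr_ge0; rewrite sq_gap.
Qed.

Lemma scale_free_closed_bidisk a b c d r : 0 < r -> r < 1 ->
  free_closed_bidisk a b c d -> free_closed_bidisk a (r * b) (r * c) d.
Proof.
move=> r_gt0 r_lt1 nz s t s1 t1; rewrite bilinE.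
apply: (affine_neq0_closed_diskP _ _).2 => //; rewrite -ltr_sqr_norm -subr_gt0.
have gap_s s' : `|s'| <= 1 -> `|c + d * s'| <= `|a + b * s'|.
  by move=> s1'; apply/ltW/(free_closed_bidisk_gap nz).
have gap_t t' : `|t'| <= 1 -> `|b + d * t'| <= `|a + c * t'|.
  by move=> t1'; apply/ltW/(free_closed_bidisk_gap (free_closed_bidiskC nz)).
apply: lt_le_trans (scaled_gap_ge (ltW r_gt0) (ltW r_lt1) s1 gap_s gap_t).
by rewrite mulr_gt0 // subr_gt0 ltr_sqr_norm free_closed_bidisk_gap.
Qed.

Lemma scale_free_off_torus a b c d r : 0 < r -> r < 1 ->
  free_off_torus a b c d -> free_off_torus a (r * b) (r * c) d.
Proof.
move=> r_gt0 r_lt1 nz s t s1 t1 st; rewrite bilinE.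
have gap_s s' : `|s'| <= 1 -> `|c + d * s'| <= `|a + b * s'|.
  by move=> s1'; case: (free_off_torus_gap_le nz s1').
have gap_t t' : `|t'| <= 1 -> `|b + d * t'| <= `|a + c * t'|.
  by move=> t1'; case: (free_off_torus_gap_le (free_off_torusC nz) t1').
have gap := scaled_gap_ge (ltW r_gt0) (ltW r_lt1) s1 gap_s gap_t.
have [s_lt1 | s_eq1] := boolP (`|s| < 1).
  apply: (affine_neq0_closed_diskP _ _).2 => //; rewrite -ltr_sqr_norm -subr_gt0.
  apply: lt_le_trans gap.
  by rewrite mulr_gt0 // subr_gt0 ltr_sqr_norm free_off_torus_gap_lt.
have t_lt1 : `|t| < 1 by move: st; rewrite (negPf s_eq1).
apply: (affine_neq0_open_diskP _ _).2 => //; split.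
  rewrite -ler_sqr_norm -subr_ge0; apply: le_trans gap.
  by apply: mulr_ge0; [exact: ltW | rewrite subr_ge0 ler_sqr_norm gap_s].
have ba : `|b| < `|a|.
  have n0 : `|0 : C| < 1 by rewrite normr0 ltr01.
  by have := free_off_torus_gap_lt (free_off_torusC nz) n0; rewrite !mulr0 !addr0.
apply: (affine_neq0_closed_diskP _ _).2 => //; rewrite normrM.
by apply: le_lt_trans ba; rewrite ler_piMl // ger0_norm ltW.
Qed.

Lemma sym_free_closed_bidisk a b r : 0 <= r -> r < 1 -> `|b| < `|a| ->
  free_closed_bidisk a (r * b) (r * a) b.
Proof.
move=> r_ge0 r_lt1 ba s t s1 t1.
have -> : bilin a (r * b) (r * a) b s t = a * (1 + r * t) + b * (r + t) * s.
  by rewrite /bilin; ring.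
apply: (affine_neq0_closed_diskP _ _).2 => //; rewrite !normrM.
apply: (le_lt_trans (y := `|b| * `|1 + r * t|)).
  by rewrite ler_wpM2l // mobius_norm_le // ltW.
by rewrite ltr_pM2r // normr_gt0 mobius_neq0.
Qed.

Lemma sym_free_off_torus a b r : 0 <= r -> r < 1 -> `|b| <= `|a| -> a != 0 ->
  free_off_torus a (r * b) (r * a) b.
Proof.
move=> r_ge0 r_lt1 ba a0 s t s1 t1 st.
have -> : bilin a (r * b) (r * a) b s t = a * (1 + r * t) + b * (r + t) * s.
  by rewrite /bilin; ring.
have [s_lt1 | s_eq1] := boolP (`|s| < 1).
  apply: (affine_neq0_open_diskP _ _).2 => //; split; last first.
    by rewrite mulf_neq0 // mobius_neq0.
  by rewrite !normrM ler_pM // mobius_norm_le // ltW.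
have t_lt1 : `|t| < 1 by move: st; rewrite (negPf s_eq1).
apply: (affine_neq0_closed_diskP _ _).2 => //; rewrite !normrM.
apply: (le_lt_trans (y := `|a| * `|r + t|)); first by rewrite ler_wpM2r.
by rewrite ltr_pM2l ?normr_gt0 // mobius_norm_lt.
Qed.

End BilinearScaling.

Section MultiaffineSums.
Variables (C : numClosedFieldType) (V : finType).
Notation spin := {ffun V -> bool}.
Implicit Types (c : spin -> C) (x : V -> C) (r s t : C) (S : {set V}).

Definition Zsum c x : C := \sum_(sg : spin) c sg * \prod_(v | sg v) x v.

Definition bond r (p q : bool) : C := if p != q then r else 1.

Lemma bondC r p q : bond r p q = bond r q p.
Proof. by rewrite /bond eq_sym. Qed.

Definition upd2 x (a b : V) s t : V -> C :=
  fun v => if v == a then s else if v == b then t else x v.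

Lemma eq_Zsum c x y : x =1 y -> Zsum c x = Zsum c y.
Proof. by move=> xy; apply: eq_bigr => sg _; congr (_ * _); apply: eq_bigr. Qed.

Lemma upd2_id x a b : upd2 x a b (x a) (x b) =1 x.
Proof. by move=> v; rewrite /upd2; case: eqP => [-> | _] //; case: eqP => [-> |]. Qed.

Lemma upd2_other x a b s t v : v != a -> v != b -> upd2 x a b s t v = x v.
Proof. by move=> /negPf va /negPf vb; rewrite /upd2 va vb. Qed.

Lemma upd2_le1 x a b s t : (forall v, `|x v| <= 1) -> `|s| <= 1 -> `|t| <= 1 ->
  forall v, `|upd2 x a b s t v| <= 1.
Proof. by move=> x1 s1 t1 v; rewrite /upd2; case: ifP => _ //; case: ifP. Qed.

Section TwoVertices.
Variables (a b : V).
Hypothesis ab : a != b.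

Lemma upd2_a x s t : upd2 x a b s t a = s.
Proof. by rewrite /upd2 eqxx. Qed.

Lemma upd2_b x s t : upd2 x a b s t b = t.
Proof. by rewrite /upd2 eq_sym (negPf ab) eqxx. Qed.

Definition pair_coef c x (p q : bool) : C :=
  \sum_(sg : spin | (sg a, sg b) == (p, q))
     c sg * \prod_(v | (v != a) && (v != b) && sg v) x v.

Lemma prod_upd2 x s t (sg : spin) : \prod_(v | sg v) upd2 x a b s t v =
  (if sg a then s else 1) * (if sg b then t else 1) *
  \prod_(v | (v != a) && (v != b) && sg v) x v.
Proof.
rewrite big_mkcond (bigD1 a) //= (bigD1 b) /=; last by rewrite eq_sym.
rewrite upd2_a upd2_b mulrA [in RHS]big_mkcondr; congr (_ * _ * _).
by apply: eq_bigr => v /andP[va vb]; rewrite upd2_other.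
Qed.

Lemma Zsum_bond_upd2 c r x s t :
  Zsum (fun sg => c sg * bond r (sg a) (sg b)) (upd2 x a b s t) =
  bilin (pair_coef c x false false) (r * pair_coef c x true false)
        (r * pair_coef c x false true) (pair_coef c x true true) s t.
Proof.
pose mono (p q : bool) := bond r p q * pair_coef c x p q *
  (if p then s else 1) * (if q then t else 1).
rewrite /Zsum (partition_big (fun sg : spin => (sg a, sg b)) xpredT) //=.
rewrite (eq_bigr (fun pq => mono pq.1 pq.2)); last first.
  case=> p q _; rewrite /mono /pair_coef mulr_sumr !mulr_suml.
  by apply: eq_bigr => sg /eqP [<- <-] /=; rewrite prod_upd2; ring.
by rewrite -pair_bigA /= !big_bool /mono /bond /bilin /=; ring.
Qed.

Lemma Zsum_upd2 c x s t : Zsum c (upd2 x a b s t) =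
  bilin (pair_coef c x false false) (pair_coef c x true false)
        (pair_coef c x false true) (pair_coef c x true true) s t.
Proof.
have := Zsum_bond_upd2 c 1 x s t; rewrite !mul1r => <-.
by apply: eq_bigr => sg _; rewrite /bond if_same mulr1.
Qed.

Definition flip (sg : spin) : spin := [ffun v => if v == b then ~~ sg v else sg v].

Lemma flipK : involutive flip.
Proof. by move=> sg; apply/ffunP => v; rewrite !ffunE; case: eqP => // _; rewrite negbK. Qed.

Lemma pair_coef_flip c x p : (forall sg, c (flip sg) = c sg) ->
  pair_coef c x p true = pair_coef c x p false.
Proof.
move=> c_flip; rewrite /pair_coef (reindex_inj (inv_inj flipK)) /=.
apply: eq_big => [sg | sg _]; first by rewrite !ffunE (negPf ab) eqxx; case: (sg b).
rewrite c_flip; congr (_ * _); apply: eq_bigl => v.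
by rewrite ffunE; case: (eqVneq v b) => [-> | ]; rewrite ?eqxx ?andbF.
Qed.

End TwoVertices.

Definition zero_free c S := forall x,
  (forall v, `|x v| <= 1) -> (exists2 u, u \in S & `|x u| < 1) ->
  (forall v, v \notin S -> `|x v| < 1) -> Zsum c x != 0.

Lemma eq_zero_free c c' S : c =1 c' -> zero_free c S -> zero_free c' S.
Proof.
move=> cc' nz x x1 xS xout; suff -> : Zsum c' x = Zsum c x by exact: nz.
by apply: eq_bigr => sg _; rewrite cc'.
Qed.

Lemma zero_free_bond_in c r a b S : 0 < r -> r < 1 -> a != b -> a \in S -> b \in S ->
  zero_free c S -> zero_free (fun sg => c sg * bond r (sg a) (sg b)) S.
Proof.
move=> r_gt0 r_lt1 ab aS bS nz x x_le1 [u uS xu] x_out.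
have out s t v : v \notin S -> `|upd2 x a b s t v| < 1.
  by move=> vS; rewrite upd2_other ?x_out //; apply: contraNneq vS => ->.
rewrite -(eq_Zsum _ (upd2_id x a b)) Zsum_bond_upd2 //.
case: (boolP ((u != a) && (u != b))) => [/andP[ua ub] | u_ab].
  apply: (scale_free_closed_bidisk r_gt0 r_lt1 _ (x_le1 a) (x_le1 b)) => s t s1 t1.
  rewrite -Zsum_upd2 //; apply: nz => [|| v /out //]; first exact: upd2_le1.
  by exists u; rewrite // upd2_other.
have xab : (`|x a| < 1) || (`|x b| < 1).
  by move: u_ab; rewrite negb_and !negbK => /orP[] /eqP <-; rewrite xu ?orbT.
apply: (scale_free_off_torus r_gt0 r_lt1 _ (x_le1 a) (x_le1 b) xab) => s t s1 t1 st.
rewrite -Zsum_upd2 //; apply: nz => [|| v /out //]; first exact: upd2_le1.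
by case/orP: st => ?; [exists a; rewrite ?upd2_a | exists b; rewrite ?upd2_b].
Qed.

Lemma zero_free_bond_out c r a b S : 0 <= r -> r < 1 -> a != b ->
  a \in S -> b \notin S -> (forall sg, c (flip b sg) = c sg) ->
  zero_free c S -> zero_free (fun sg => c sg * bond r (sg a) (sg b)) (b |: S).
Proof.
move=> r_ge0 r_lt1 ab aS bS c_flip nz x x_le1 [u uS xu] x_out.
rewrite -(eq_Zsum _ (upd2_id x a b)) Zsum_bond_upd2 // !pair_coef_flip //.
set A := pair_coef _ _ _ _ false false; set B := pair_coef _ _ _ _ true false.
have affine s : `|s| <= 1 -> (exists2 w, w \in S & `|upd2 x a b s 0 w| < 1) ->
    A + B * s != 0.
  have n0 : `|0 : C| <= 1 by rewrite normr0 ler01.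
  move=> s1 /(nz _ (upd2_le1 _ _ x_le1 s1 n0)).
  rewrite Zsum_upd2 // !pair_coef_flip // /bilin !mulr0 !addr0; apply=> v vS.
  have va : v != a by apply: contraNneq vS => ->.
  rewrite /upd2 (negPf va); case: ifP => [_ | /negbT vb]; first by rewrite normr0 ltr01.
  by apply: x_out; rewrite in_setU1 negb_or vb.
case: (boolP ((u \in S) && (u != a))) => [/andP[uS' ua] | u_a].
  apply: (sym_free_closed_bidisk r_ge0 r_lt1 _ (x_le1 a) (x_le1 b)).
  apply/affine_neq0_closed_diskP => s s1; apply: affine s1 _.
  by exists u; rewrite // upd2_other //; apply: contraNneq bS => <-.
have xab : (`|x a| < 1) || (`|x b| < 1).
  move: uS u_a; rewrite in_setU1 negb_and negbK => /orP[/eqP <- | uS'].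
    by rewrite xu orbT.
  by rewrite uS' /= => /eqP <-; rewrite xu.
have [ba a0] : `|B| <= `|A| /\ A != 0.
  apply/affine_neq0_open_diskP => s s1; apply: affine (ltW s1) _.
  by exists a; rewrite ?upd2_a.
exact: (sym_free_off_torus r_ge0 r_lt1 ba a0 (x_le1 a) (x_le1 b) xab).
Qed.

Lemma Zsum_one (x : V -> C) : Zsum (fun _ => 1) x = \prod_v (1 + x v).
Proof.
rewrite (eq_bigr (fun v => \sum_(j : bool) (if j then x v else 1))); last first.
  by move=> v _; rewrite big_bool addrC.
by rewrite bigA_distr_bigA; apply: eq_bigr => sg _; rewrite mul1r big_mkcond.
Qed.

Definition negf (sg : spin) : spin := [ffun v => ~~ sg v].

Lemma negfK : involutive negf.
Proof. by move=> sg; apply/ffunP => v; rewrite !ffunE negbK. Qed.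

Lemma Zsum_negf c x : (forall sg, c (negf sg) = c sg) -> (forall v, x v != 0) ->
  Zsum c x = (\prod_v x v) * Zsum c (fun v => (x v)^-1).
Proof.
move=> c_neg x0; rewrite /Zsum mulr_sumr (reindex_inj (inv_inj negfK)) /=.
apply: eq_bigr => sg _; rewrite c_neg mulrCA; congr (_ * _).
rewrite [in RHS](bigID (fun v => sg v)) /= [X in X * _]mulrC -mulrA -big_split /=.
rewrite [X in _ * X]big1 ?mulr1 => [|v _]; last by rewrite divff.
by apply: eq_bigl => v; rewrite ffunE.
Qed.

End MultiaffineSums.

Section LeeYang.
Variables (C : numClosedFieldType) (V E : finType) (ends : E -> V * V).
Notation spin := {ffun V -> bool}.
Variable r : C.
Hypotheses (r_gt0 : 0 < r) (r_lt1 : r < 1).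
Implicit Types (F : {set E}) (S : {set V}) (sg : spin).

Definition cut (e : E) sg := sg (ends e).1 != sg (ends e).2.

Definition boltz F sg : C := r ^+ #|[set e in F | cut e sg]|.

Definition edges_within F S := forall e, e \in F -> ((ends e).1 \in S) && ((ends e).2 \in S).

Lemma boltz_setU1 F e sg : e \notin F ->
  boltz (e |: F) sg = boltz F sg * bond r (sg (ends e).1) (sg (ends e).2).
Proof.
move=> eF; rewrite /boltz /bond -/(cut e sg).
have [cut_e | uncut_e] := boolP (cut e sg).
  rewrite (_ : [set _ in _ | _] = e |: [set e' in F | cut e' sg]).
    by rewrite cardsU1 inE (negPf eF) exprS mulrC.
  by apply/setP => e'; rewrite !inE; case: eqP => [-> | ].
rewrite mulr1 (_ : [set _ in _ | _] = [set e' in F | cut e' sg]) //.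
by apply/setP => e'; rewrite !inE; case: eqP => [-> | ] //=; rewrite (negPf uncut_e) andbF.
Qed.

Lemma boltz_flip F S b sg : edges_within F S -> b \notin S ->
  boltz F (flip b sg) = boltz F sg.
Proof.
move=> FS bS; rewrite /boltz.
suff -> : [set e in F | cut e (flip b sg)] = [set e in F | cut e sg] by [].
apply/setP => e; rewrite !inE.
have [eF | //] := boolP (e \in F); case/andP: (FS e eF) => e1 e2.
have [b1 b2] : ((ends e).1 != b) /\ ((ends e).2 != b).
  by split; apply: contraNneq bS => <-.
by rewrite /cut !ffunE (negPf b1) (negPf b2).
Qed.

Lemma zero_free_pendant F S a b : edges_within F S -> a \in S -> b \notin S ->
  zero_free (boltz F) S ->
  zero_free (fun sg => boltz F sg * bond r (sg a) (sg b)) (b |: S).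
Proof.
move=> FS aS bS; have ab : a != b by apply: contraNneq bS => <-.
exact: zero_free_bond_out (ltW r_gt0) r_lt1 ab aS bS (fun sg => boltz_flip sg FS bS).
Qed.

Lemma zero_free_add_edge F S e : edges_within F S -> e \notin F ->
  ((ends e).1 \in S) || ((ends e).2 \in S) -> zero_free (boltz F) S ->
  exists2 S' : {set V}, S \subset S' &
    edges_within (e |: F) S' /\ zero_free (boltz (e |: F)) S'.
Proof.
move=> FS eF eS nz.
have within (S' : {set V}) : S \subset S' -> (ends e).1 \in S' -> (ends e).2 \in S' ->
    edges_within (e |: F) S'.
  move=> SS' e1 e2 e'; rewrite in_setU1 => /orP[/eqP -> | e'F]; first by rewrite e1.
  by case/andP: (FS e' e'F) => ? ?; rewrite !(subsetP SS').
have add_bond := eq_zero_free (fun sg => esym (boltz_setU1 sg eF)).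
move: eS within add_bond; set a := (ends e).1; set b := (ends e).2 => eS within add_bond.
have [ab | ab] := eqVneq a b.
  have aS : a \in S by move: eS; rewrite -ab orbb.
  exists S => //; split; first by apply: within; rewrite -?ab.
  by apply: add_bond; apply: eq_zero_free nz => sg; rewrite ab /bond eqxx mulr1.
have [aS | aS] := boolP (a \in S); have [bS | bS] := boolP (b \in S).
- exists S => //; split; first exact: within.
  exact/add_bond/zero_free_bond_in.
- exists (b |: S); first exact: subsetUr.
  split; first by apply: within; rewrite ?subsetUr ?setU11 ?in_setU1 ?aS ?orbT.
  exact/add_bond/zero_free_pendant.
- exists (a |: S); first exact: subsetUr.
  split; first by apply: within; rewrite ?subsetUr ?setU11 ?in_setU1 ?bS ?orbT.
  apply: add_bond; apply: eq_zero_free (zero_free_pendant FS bS aS nz) => sg.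
  by rewrite bondC.
- by move: eS; rewrite (negPf aS) (negPf bS).
Qed.

Hypothesis conn : forall u v, connect (adj ends) u v.

Lemma edges_within_all F S : edges_within F S -> S != set0 ->
  (forall e, e \notin F -> ((ends e).1 \notin S) && ((ends e).2 \notin S)) ->
  F = setT /\ S = setT.
Proof.
move=> FS /set0Pn[s0 s0S] outside.
have same_side (e : E) : ((ends e).1 \in S) = ((ends e).2 \in S).
  have [eF | eF] := boolP (e \in F); first by case/andP: (FS e eF) => -> ->.
  by case/andP: (outside e eF) => /negPf -> /negPf ->.
have closedS : closed (adj ends) (mem S).
  by move=> u v /existsP[e /orP[] /eqP ends_e]; have := same_side e; rewrite ends_e.
have S_all : S = setT.
  by apply/setP => v; rewrite inE -(closed_connect closedS (conn s0 v)).
split=> //; apply/setP => e; rewrite inE; apply/negPn/negP => /outside.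
by rewrite S_all inE.
Qed.

Lemma zero_free_grow F S : edges_within F S -> S != set0 ->
  zero_free (boltz F) S -> zero_free (boltz setT) setT.
Proof.
have [n] := ubnP #|~: F|; elim: n F S => // n IH F S size_F FS S0 nz.
case: (pickP [pred e | (e \notin F) && (((ends e).1 \in S) || ((ends e).2 \in S))]).
  move=> e /andP[eF eS]; have [S' SS' [FS' nz']] := zero_free_add_edge FS eF eS nz.
  apply: IH FS' _ nz'; last first.
    by apply/set0Pn; case/set0Pn: S0 => v vS; exists v; apply: (subsetP SS').
  rewrite -ltnS; apply: leq_trans size_F; rewrite ltnS proper_card //.
  rewrite properC properE subsetUr /=.
  by apply/subsetPn; exists e; rewrite ?setU11.
move=> none; suff [<- <-] : F = setT /\ S = setT by [].
apply: (edges_within_all FS S0) => e eF.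
by move/negbT: (none e); rewrite /= eF negb_or.
Qed.

Lemma boltz_set0 sg : boltz set0 sg = 1.
Proof.
by rewrite /boltz (_ : [set _ in _ | _] = set0) ?cards0 //; apply/setP => e; rewrite !inE.
Qed.

Lemma ising_neq0_in_disk x : (forall v, `|x v| <= 1) -> (exists u, `|x u| < 1) ->
  Zsum (boltz setT) x != 0.
Proof.
move=> x_le1 [u xu].
have base : zero_free (boltz set0) [set u].
  apply: (eq_zero_free (c := fun _ => 1)) => [sg | y _ [u' /set1P -> yu] y_out].
    by rewrite boltz_set0.
  rewrite Zsum_one prodf_seq_neq0; apply/allP => v _ /=.
  have yv : `|y v| < 1 by have [-> // | vu] := eqVneq v u; rewrite y_out ?in_set1.
  by rewrite -[y v]mul1r; apply/(affine_neq0_open_diskP _ _).2; rewrite ?normr1 ?oner_neq0.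
have FS : edges_within set0 [set u] by move=> e; rewrite in_set0.
have S0 : [set u] != set0 by apply/set0Pn; exists u; rewrite set11.
apply: (zero_free_grow FS S0 base x_le1); first by exists u.
by move=> v; rewrite inE.
Qed.

Lemma boltz_negf F sg : boltz F (negf sg) = boltz F sg.
Proof.
rewrite /boltz; suff -> : [set e in F | cut e (negf sg)] = [set e in F | cut e sg] by [].
by apply/setP => e; rewrite !inE /cut !ffunE; case: (sg _); case: (sg _).
Qed.

Lemma ising_neq0_out_disk x : (forall v, 1 <= `|x v|) -> (exists u, 1 < `|x u|) ->
  Zsum (boltz setT) x != 0.
Proof.
move=> x_ge1 [u xu]; have x0 v : x v != 0 by rewrite -normr_gt0 (lt_le_trans ltr01).
rewrite (Zsum_negf (boltz_negf setT)) // mulf_neq0 //; first exact/prodf_neq0.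
apply: ising_neq0_in_disk => [v | ]; first by rewrite normfV invf_le1 ?normr_gt0.
by exists u; rewrite normfV invf_lt1 // (lt_trans ltr01).
Qed.

End LeeYang.

Section PolynomialsNearOne.
Variable C : numClosedFieldType.
Implicit Types (p q : {poly C}) (d e r t : C).

Lemma re_inv_one_sub_ge r : `|r| <= 1 -> r != 1 -> 1 <= (1 - r)^-1 + ((1 - r)^-1)^*.
Proof.
move=> r_le1 r_neq1; have d0 : 1 - r != 0 by rewrite subr_eq0 eq_sym.
have d0' : 1 - r^* != 0 by rewrite -conjC1 -rmorphB conjC_eq0.
have -> : (1 - r)^-1 + ((1 - r)^-1)^* = 1 + (1 - `|r| ^+ 2) / `|1 - r| ^+ 2.
  by rewrite fmorphV !normCK !(rmorphB, rmorph1) /=; field; rewrite d0 d0'.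
by rewrite lerDl divr_ge0 ?exprn_ge0 // subr_ge0 expr_le1.
Qed.

Lemma horner1_deriv_prod_XsubC (rs : seq C) : 1 \notin rs ->
  (\prod_(r <- rs) ('X - r%:P))^`().[1] =
  (\prod_(r <- rs) ('X - r%:P)).[1] * \sum_(r <- rs) (1 - r)^-1.
Proof.
elim: rs => [|r rs IH]; first by rewrite !big_nil mulr0 derivC horner0.
rewrite in_cons negb_or => /andP[r_neq1 /IH {}IH].
rewrite !big_cons derivM hornerD !hornerM IH derivXsubC hornerC hornerXsubC.
have d0 : 1 - r != 0 by rewrite subr_eq0.
by field.
Qed.

Lemma gauss_lucas_horner1 p : (1 < size p)%N -> ~~ root p 1 ->
  (forall r, root p r -> `|r| <= 1) -> p^`().[1] != 0.
Proof.
move=> p_size p1 roots_le1; have [rs def_p] := closed_field_poly_normal p.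
have lc0 : lead_coef p != 0 by rewrite lead_coef_eq0 -size_poly_gt0 (ltn_trans _ p_size).
have rs_roots r : r \in rs -> root p r.
  by move=> r_rs; rewrite def_p rootZ // root_prod_XsubC.
have one_rs : 1 \notin rs by apply: contra p1 => /rs_roots.
have rs0 : size rs != 0%N.
  by move: p_size; rewrite def_p size_scale // size_prod_XsubC; case: (size rs).
rewrite def_p derivZ hornerZ horner1_deriv_prod_XsubC // !mulf_neq0 //.
  by rewrite -/(root _ 1) root_prod_XsubC.
set sum := \sum_(r <- rs) _.
have : (size rs)%:R <= sum + sum^*.
  rewrite /sum rmorph_sum -big_split /= -sum1_size natr_sum.
  rewrite big_seq [X in _ <= X]big_seq; apply: ler_sum => r r_rs.
  apply: re_inv_one_sub_ge; first exact/roots_le1/rs_roots.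
  by apply: contraNneq one_rs => <-.
by apply: contraTneq => ->; rewrite rmorph0 addr0 lern0.
Qed.

Lemma horner_lipschitz1 p : exists2 K, 0 <= K &
  forall t, `|t| <= 2 -> `|p.[t] - p.[1]| <= K * `|t - 1|.
Proof.
have /factor_theorem [q def_q] : root (p - p.[1]%:P) 1 by rewrite /root !hornerE subrr.
exists (\sum_(i < size q) `|q`_i| * 2 ^+ i) => [|t t_le2].
  by apply: sumr_ge0 => i _; rewrite mulr_ge0 ?exprn_ge0.
have := congr1 (horner^~ t) def_q; rewrite !hornerE => ->.
rewrite normrM ler_wpM2r // horner_coef (le_trans (ler_norm_sum _ _ _)) //.
apply: ler_sum => i _; rewrite normrM normrX ler_wpM2l //.
by rewrite lerXn2r ?nnegrE.
Qed.

Lemma exists_near1 p q ep eq : 0 < ep -> 0 < eq -> exists2 d, 0 < d &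
  `|p.[1 + d] - p.[1]| < ep /\ `|q.[1 + d] - q.[1]| < eq.
Proof.
move=> ep_gt0 eq_gt0; have [Kp Kp_ge0 Lp] := horner_lipschitz1 p.
have [Kq Kq_ge0 Lq] := horner_lipschitz1 q.
pose L := Kp / ep + Kq / eq + 1.
have [Lp_ge0 Lq_ge0] : 0 <= Kp / ep /\ 0 <= Kq / eq.
  by split; apply: divr_ge0 => //; apply: ltW.
have L_ge1 : 1 <= L by rewrite lerDr addr_ge0.
have L_gt0 : 0 < L := lt_le_trans ltr01 L_ge1.
have d_gt0 : 0 < L^-1 by rewrite invr_gt0.
have t_le2 : `|1 + L^-1| <= 2.
  by rewrite ger0_norm ?addr_ge0 ?ler01 ?(ltW d_gt0) // -[2]/(1 + 1) lerD2l invf_le1.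
have t_sub1 : `|1 + L^-1 - 1| = L^-1 by rewrite addrC addKr ger0_norm // ltW.
have K_lt K e : 0 < e -> K / e < L -> K * L^-1 < e.
  by move=> e_gt0; rewrite ltr_pdivrMr // -ltr_pdivrMl // mulrC.
exists L^-1 => //; split.
  apply: le_lt_trans (Lp _ t_le2) _; rewrite t_sub1 K_lt //.
  by rewrite /L -addrA ltrDl ltr_wpDl.
apply: le_lt_trans (Lq _ t_le2) _; rewrite t_sub1 K_lt //.
by rewrite /L [Kp / ep + _]addrC -addrA ltrDl ltr_wpDl.
Qed.

End PolynomialsNearOne.

Section ConjugatePolynomial.
Variable C : numClosedFieldType.
Implicit Types (p : {poly C}) (t : C).

Definition conjp p := map_poly Num.conj_op p.

Lemma horner_conjp p t : t^* = t -> (conjp p).[t] = (p.[t])^*.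
Proof. by move=> tr; rewrite -[in LHS]tr horner_map. Qed.

Lemma horner_mul_conjp p t : t^* = t -> (p * conjp p).[t] = `|p.[t]| ^+ 2.
Proof. by move=> tr; rewrite hornerM horner_conjp // normCK. Qed.

Lemma horner_deriv_mul_conjp p t : t^* = t ->
  (p * conjp p)^`().[t] = p^`().[t] * (p.[t])^* + p.[t] * (p^`().[t])^*.
Proof. by move=> tr; rewrite derivM deriv_map hornerD !hornerM !horner_conjp. Qed.

End ConjugatePolynomial.

Section DoubleRootOnCircle.
Variable C : numClosedFieldType.
Variables (A B : {poly C}) (y : C) (n : nat).
Hypotheses (n_gt0 : (0 < n)%N) (y_norm : `|y| = 1).
Hypotheses (root1 : (A + y *: B).[1] = 0) (B1_neq0 : B.[1] != 0).
Hypothesis B_dominates : forall d, 0 < d -> B.[1 + d] != 0 ->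
  `|(1 + d) ^+ n * A.[1 + d]| <= `|B.[1 + d]|.

Let A1 : A.[1] = - (y * B.[1]).
Proof. by apply/eqP; rewrite -addr_eq0; move: root1; rewrite hornerD hornerZ => ->. Qed.

(* On the real axis [gap] is |B|^2 - |X^n A|^2: it vanishes at 1, is nonnegative
   just to the right of 1 by [B_dominates], yet a double root of A + y B at 1
   would give it the negative slope -2n|B(1)|^2 there. *)
Let Q := 'X^n * A.
Let gap := B * conjp B - Q * conjp Q.

Lemma horner_gap_ge0 d : 0 < d -> B.[1 + d] != 0 -> 0 <= gap.[1 + d].
Proof.
move=> d_gt0 Bd; have dr : (1 + d)^* = 1 + d.
  by rewrite conj_Creal // ger0_real // addr_ge0 ?ler01 ?ltW.
have hQ : Q.[1 + d] = (1 + d) ^+ n * A.[1 + d] by rewrite hornerM hornerXn.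
by rewrite /gap hornerD hornerN !horner_mul_conjp // hQ subr_ge0 ler_sqr_norm B_dominates.
Qed.

Lemma deriv_gap1 : (A + y *: B)^`().[1] = 0 -> gap^`().[1] = - (n.*2%:R * `|B.[1]| ^+ 2).
Proof.
move=> d1.
have dA1 : A^`().[1] = - (y * B^`().[1]).
  by apply/eqP; rewrite -addr_eq0; move: d1; rewrite derivD derivZ hornerD hornerZ => ->.
have Q1 : Q.[1] = - (y * B.[1]) by rewrite hornerM hornerXn expr1n mul1r A1.
have dQ1 : Q^`().[1] = - (y * (n%:R * B.[1] + B^`().[1])).
  by rewrite derivM derivXn hornerD !hornerM hornerMn !hornerXn !expr1n A1 dA1; ring.
have y0 : y != 0 by rewrite -normr_eq0 y_norm oner_neq0.
have yc : y^* = y^-1 by apply: (mulfI y0); rewrite -normCK y_norm expr1n divff.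
rewrite /gap derivB hornerD hornerN !horner_deriv_mul_conjp ?conjC1 // Q1 dQ1 normCK.
by rewrite !(rmorphN, rmorphM, rmorphD) rmorph_nat /= yc -mul2n natrM; field.
Qed.

Lemma deriv_pencil_neq0 : (A + y *: B)^`().[1] != 0.
Proof.
apply/negP => /eqP /deriv_gap1 dgap.
have /factor_theorem [S def_gap] : root gap 1.
  rewrite /root /gap hornerD hornerN !horner_mul_conjp ?conjC1 //.
  by rewrite hornerM hornerXn expr1n mul1r A1 normrN normrM y_norm mul1r subrr.
have S1 : S.[1] = - (n.*2%:R * `|B.[1]| ^+ 2).
  rewrite -dgap def_gap derivM derivXsubC hornerD !hornerM hornerXsubC.
  by rewrite subrr mulr0 add0r hornerC mulr1.
set a := _ * _ in S1.
have a_gt0 : 0 < a by rewrite mulr_gt0 ?ltr0n ?double_gt0 ?exprn_gt0 ?normr_gt0.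
have B1_gt0 : 0 < `|B.[1]| by rewrite normr_gt0.
have [d d_gt0 [Sd Bd]] := exists_near1 S B a_gt0 B1_gt0.
have Bd0 : B.[1 + d] != 0 by apply: contraTneq Bd => ->; rewrite sub0r normrN ltxx.
have := horner_gap_ge0 d_gt0 Bd0.
rewrite def_gap hornerM hornerXsubC addrAC subrr add0r pmulr_lge0 // => Sd_ge0.
move: Sd; rewrite S1 opprK ger0_norm ?addr_ge0 ?(ltW a_gt0) // gtrDr => S_lt0.
by have := lt_le_trans S_lt0 Sd_ge0; rewrite ltxx.
Qed.

End DoubleRootOnCircle.

Section IsingPolynomial.
Variables (C : numClosedFieldType) (V E : finType) (ends : E -> V * V).
Notation spin := {ffun V -> bool}.
Variables (r : C) (w : V -> nat).
Hypotheses (r_gt0 : 0 < r) (r_lt1 : r < 1) (w_gt0 : forall v, (0 < w v)%N).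
Hypothesis conn : forall u v, connect (adj ends) u v.
Implicit Types (y : V -> C) (sg : spin) (s t : C).

Let Z := boltz ends r setT.

Definition wsum sg := (\sum_(v | sg v) w v)%N.

Definition Zpoly_on (P : pred spin) y : {poly C} :=
  \sum_(sg | P sg) (Z sg * \prod_(v | sg v) y v) *: 'X^(wsum sg).

Notation Zpoly := (Zpoly_on predT).

Lemma horner_Zpoly y t : (Zpoly y).[t] = Zsum Z (fun v => t ^+ w v * y v).
Proof.
rewrite horner_sum; apply: eq_bigr => sg _.
by rewrite hornerZ hornerXn big_split /= prodrXr /wsum; ring.
Qed.

Lemma Zpoly_neq0_out_disk y t : (forall v, 1 <= `|t ^+ w v * y v|) ->
  (exists u, 1 < `|t ^+ w u * y u|) -> (Zpoly y).[t] != 0.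
Proof. by rewrite horner_Zpoly; apply: ising_neq0_out_disk. Qed.

Lemma eq_Zpoly_on P y y' : y =1 y' -> Zpoly_on P y = Zpoly_on P y'.
Proof.
by move=> yy'; apply: eq_bigr => sg _; congr (_ *: _); congr (_ * _); apply: eq_bigr.
Qed.

Definition Zpoly_minus y v0 := Zpoly_on (fun sg => ~~ sg v0) y.
Definition Zpoly_plus y v0 := Zpoly_on (fun sg => sg v0) (fun u => if u == v0 then 1 else y u).

Lemma Zpoly_set1 y v0 s : Zpoly (fun u => if u == v0 then s else y u) =
  Zpoly_minus y v0 + s *: Zpoly_plus y v0.
Proof.
rewrite /Zpoly_minus /Zpoly_plus /Zpoly_on (bigID (fun sg => sg v0)) [RHS]addrC.
rewrite scaler_sumr /=; congr (_ + _).
  apply: eq_bigr => sg sg_v0; rewrite scalerA; congr (_ *: _).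
  rewrite (bigD1 v0) //= (bigD1 v0 sg_v0) /= !eqxx mul1r mulrCA; congr (_ * (_ * _)).
  by apply: eq_bigr => u /andP[_ /negPf ->].
apply: eq_bigr => sg sg_v0; congr (_ *: _); congr (_ * _); apply: eq_bigr => u u_sg.
by case: eqP => // u_v0; rewrite -u_v0 u_sg in sg_v0.
Qed.

Lemma Zpoly_pencil y v0 : Zpoly y = Zpoly_minus y v0 + y v0 *: Zpoly_plus y v0.
Proof. by rewrite -Zpoly_set1; apply: eq_Zpoly_on => u; case: eqP => [-> |]. Qed.

Let full : spin := [ffun => true].

Lemma wsum_eq_full sg : (wsum sg == wsum full) = (sg == full).
Proof.
apply/eqP/eqP => [eq_full | -> //]; apply/ffunP => v; rewrite ffunE.
apply/negPn/negP => sg_v; move: eq_full; rewrite /wsum [in RHS](bigID (fun u => sg u)) /=.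
have -> : \sum_(u | full u && sg u) w u = \sum_(u | sg u) w u.
  by apply: eq_bigl => u; rewrite ffunE.
move/eqP; rewrite -[X in X == _]addn0 eqn_add2l eq_sym; apply/negP; rewrite -lt0n.
rewrite (bigD1 v) /=; last by rewrite ffunE.
exact: leq_trans (w_gt0 v) (leq_addr _ _).
Qed.

Lemma coef_Zpoly_full y : (Zpoly y)`_(wsum full) = \prod_v y v.
Proof.
rewrite coef_sumMXn (big_pred1 full) => [|sg]; last by rewrite /= wsum_eq_full.
rewrite /Z /boltz (_ : [set _ in _ | _] = set0) ?cards0 ?mul1r.
  by apply: eq_bigl => v; rewrite ffunE.
by apply/setP => e; rewrite !inE /cut !ffunE.
Qed.

Lemma size_Zpoly y : (0 < #|V|)%N -> (forall v, y v != 0) -> (1 < size (Zpoly y))%N.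
Proof.
move=> /card_gt0P[v _] y0; have wfull_gt0 : (0 < wsum full)%N.
  by rewrite /wsum (bigD1 v) ?ffunE //= (leq_trans (w_gt0 v)) ?leq_addr.
apply: leq_ltn_trans wfull_gt0 _; rewrite ltnNge; apply/negP => /leq_sizeP size_le.
have : \prod_v y v != 0 by apply/prodf_neq0 => u _.
by rewrite -coef_Zpoly_full size_le ?eqxx.
Qed.

Lemma root_Zpoly_le1 y t : (0 < #|V|)%N -> (forall v, 1 <= `|y v|) ->
  root (Zpoly y) t -> `|t| <= 1.
Proof.
move=> /card_gt0P[u _] y_ge1; apply: contraTT; rewrite -real_ltNge ?rpred1 ?normr_real //.
move=> t_gt1; apply: Zpoly_neq0_out_disk => [v | ].
  by rewrite normrM normrX mulr_ege1 // exprn_ege1 // ltW.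
exists u; rewrite normrM normrX (lt_le_trans _ (ler_peMr _ (y_ge1 u))) ?exprn_ge0 //.
by rewrite exprn_egt1 // -lt0n w_gt0.
Qed.

Lemma Zpoly_plus1_neq0 y v0 : (forall v, 1 <= `|y v|) -> root (Zpoly y) 1 ->
  (Zpoly_plus y v0).[1] != 0.
Proof.
move=> y_ge1 root1; apply/negP => /eqP plus0.
have : (Zpoly (fun u => if u == v0 then 2 else y u)).[1] != 0.
  apply: Zpoly_neq0_out_disk => [u | ]; last first.
    by exists v0; rewrite expr1n mul1r eqxx normr_nat ltr1n.
  by rewrite expr1n mul1r; case: eqP; rewrite ?normr_nat ?ler1n.
rewrite (Zpoly_set1 y v0 2) hornerD hornerZ plus0 mulr0 addr0.
by move: root1; rewrite /root (Zpoly_pencil y v0) hornerD hornerZ plus0 mulr0 addr0 => ->.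
Qed.

Lemma Zpoly_plus_dominates y v0 d : (forall v, 1 <= `|y v|) -> 0 < d ->
  (Zpoly_plus y v0).[1 + d] != 0 ->
  `|(1 + d) ^+ w v0 * (Zpoly_minus y v0).[1 + d]| <= `|(Zpoly_plus y v0).[1 + d]|.
Proof.
move=> y_ge1 d_gt0 plus_neq0; set a := (Zpoly_minus y v0).[1 + d].
set b := (Zpoly_plus y v0).[1 + d].
have d_ge0 := ltW d_gt0.
have t_ge1 : 1 <= `|1 + d| by rewrite ger0_norm ?addr_ge0 ?ler01 // lerDl.
rewrite real_leNgt ?normr_real //; apply/negP => gt_b.
have : (Zpoly (fun u => if u == v0 then - a / b else y u)).[1 + d] != 0.
  apply: Zpoly_neq0_out_disk => [u | ]; last first.
    exists v0; rewrite eqxx normrM normf_div normrN mulrA -normrM.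
    by rewrite ltr_pdivlMr ?normr_gt0 // mul1r.
  case: eqP => [-> | _]; last by rewrite normrM normrX mulr_ege1 // exprn_ege1.
  rewrite normrM normf_div normrN mulrA -normrM ler_pdivlMr ?normr_gt0 // mul1r.
  exact: ltW gt_b.
by rewrite (Zpoly_set1 y v0 (- a / b)) hornerD hornerZ -/a -/b (divfK plus_neq0) addrN eqxx.
Qed.

Lemma deriv_Zpoly1_neq0 y : (0 < #|V|)%N -> (forall v, 1 <= `|y v|) ->
  (Zpoly y)^`().[1] != 0.
Proof.
move=> V_gt0 y_ge1; have y0 v : y v != 0 by rewrite -normr_gt0 (lt_le_trans ltr01).
have [root1 | not_root1] := boolP (root (Zpoly y) 1); last first.
  by apply: gauss_lucas_horner1 (size_Zpoly V_gt0 y0) not_root1 _ => t /root_Zpoly_le1; apply.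
have [v0 _] := card_gt0P V_gt0.
have yv0 : `|y v0| = 1.
  apply/eqP; rewrite eq_le y_ge1 andbT real_leNgt ?normr_real ?rpred1 //.
  apply: contraTN root1 => y_gt1.
  by apply: Zpoly_neq0_out_disk => [v | ]; [|exists v0]; rewrite expr1n mul1r.
rewrite (Zpoly_pencil y v0); apply: deriv_pencil_neq0 yv0 _ _ _ => //.
- by move: root1; rewrite /root (Zpoly_pencil y v0) => /eqP.
- exact: Zpoly_plus1_neq0.
- by move=> d d_gt0; apply: Zpoly_plus_dominates.
Qed.

End IsingPolynomial.

Lemma DZw_deriv_Zpoly (C : numClosedFieldType) (V E : finType) (ends : E -> V * V)
    (w : V -> nat) (r : C) (z : V -> C) :
  DZw ends w r z = (Zpoly_on ends r w predT (fun v => z v ^+ w v))^`().[1].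
Proof.
rewrite /DZw /Zpoly_on raddf_sum horner_sum; apply: eq_bigr => sg _.
rewrite /= derivZ derivXn hornerZ hornerMn hornerXn expr1n /boltz /wsum /dcut.
have -> : [set e in [set: E] | cut ends e sg] = [set e | sg (ends e).1 != sg (ends e).2].
  by apply/setP => e; rewrite !inE.
by rewrite mulr_natr; ring.
Qed.

Lemma DZw_neq0 (C : numClosedFieldType) (V E : finType) (ends : E -> V * V)
    (w : V -> nat) (r : C) (z : V -> C) :
  connected_graph ends -> (forall v, (0 < w v)%N) -> 0 < r -> r < 1 ->
  (forall v, 1 <= `|z v|) -> DZw ends w r z != 0.
Proof.
move=> [V_gt0 conn] w_gt0 r_gt0 r_lt1 z_ge1; rewrite DZw_deriv_Zpoly.
by apply: deriv_Zpoly1_neq0 => // v; rewrite normrX exprn_ege1.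
Qed.

Theorem theorem5 (C : numClosedFieldType) (V E : finType) (ends : E -> V * V) :
  connected_graph ends -> WSGLP C ends /\ SGLP C ends.
Proof.
move=> conn; split=> [w r z legal_w | r z]; last exact: DZw_neq0.
by apply: DZw_neq0 => // v; case: (legal_w v).
Qed.
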